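(* Let $3\le a<b$ be integers and regard $T(z,\alpha)=\frac{-\ln(1-z)}{\alpha a z^{a-1}+(1-\alpha)bz^{b-1}}$ as a function of $(z,\alpha)\in(0,1)\times\mathbb{R}$ (where the denominator is nonzero). Then $T$ has exactly one critical point, namely $$(\tilde z,\tilde\alpha)=\Big((a/b)^{1/(b-a)},\ \frac{b-1}{b-a}-\frac{1}{f(\tilde z)(b-a)}\Big),$$ and this point is a saddle point (the Hessian of $T$ there has negative determinant).
   Context: $f(z)=\frac{-\ln(1-z)(1-z)}{z}$ for $z\in(0,1)$. *)

From Stdlib Require Import Reals.
Open Scope R_scope.

Definition f (z : R) : R := - ln (1 - z) * (1 - z) / z.

Definition denom (a b : nat) (z alpha : R) : R :=
  alpha * INR a * z ^ (a - 1) + (1 - alpha) * INR b * z ^ (b - 1).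

Definition T (a b : nat) (z alpha : R) : R := - ln (1 - z) / denom a b z alpha.

Definition dom (a b : nat) (z alpha : R) : Prop :=
  0 < z < 1 /\ denom a b z alpha <> 0.

Definition critical_point (F : R -> R -> R) (x0 y0 : R) : Prop :=
  derivable_pt_lim (fun x => F x y0) x0 0 /\
  derivable_pt_lim (fun y => F x0 y) y0 0.

Definition is_hessian (F : R -> R -> R) (x0 y0 hxx hxy hyx hyy : R) : Prop :=
  exists (Fx Fy : R -> R -> R) (eps : R), 0 < eps /\
    (forall x y, Rabs (x - x0) < eps -> Rabs (y - y0) < eps ->
       derivable_pt_lim (fun t => F t y) x (Fx x y) /\
       derivable_pt_lim (fun s => F x s) y (Fy x y)) /\
    derivable_pt_lim (fun t => Fx t y0) x0 hxx /\
    derivable_pt_lim (fun s => Fx x0 s) y0 hxy /\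
    derivable_pt_lim (fun t => Fy t y0) x0 hyx /\
    derivable_pt_lim (fun s => Fy x0 s) y0 hyy.

Definition z_tilde (a b : nat) : R := Rpower (INR a / INR b) (1 / (INR b - INR a)).

Definition alpha_tilde (a b : nat) : R :=
  (INR b - 1) / (INR b - INR a) - 1 / (f (z_tilde a b) * (INR b - INR a)).

From Pilot Require Import Defs.
From Stdlib Require Import Reals Lra Lia.
From Coquelicot Require Import Coquelicot.
Open Scope R_scope.

(* The key observation is that D is affine in alpha, with slope
   D_alpha(z) = a z^(a-1) - b z^(b-1).  Hence dT/dalpha = -L D_alpha / D^2, and since
   L > 0 on (0,1) the alpha-derivative vanishes exactly at the unique positive root
   z~ = (a/b)^(1/(b-a)) of D_alpha.  At any root z of D_alpha we have b z^(b-1) = a z^(a-1),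
   so D = a z^(a-1) no longer depends on alpha, and the identity z (z^n)' = n z^n turns every
   derivative of D into a multiple of a z^(a-1).  This yields
     dT/dz = K(z) (alpha - alpha~(z)),   d2T/dalpha2 = 0,   d2T/dz dalpha = K(z) > 0,
   with K(z) = L(z) (b-a) / (z a z^(a-1)).  So the only critical point is (z~, alpha~(z~)),
   and the Hessian there has determinant -K^2 < 0. *)

Definition L (z : R) : R := - ln (1 - z).
Definition denom_alpha (a b : nat) (z : R) : R := INR a * z ^ (a - 1) - INR b * z ^ (b - 1).
Definition denom_z (a b : nat) (z alpha : R) : R :=
  alpha * INR a * (INR (a - 1) * z ^ pred (a - 1)) +
  (1 - alpha) * INR b * (INR (b - 1) * z ^ pred (b - 1)).
Definition denom_alpha_z (a b : nat) (z : R) : R :=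
  INR a * (INR (a - 1) * z ^ pred (a - 1)) - INR b * (INR (b - 1) * z ^ pred (b - 1)).
Definition T_z (a b : nat) (z alpha : R) : R :=
  (denom a b z alpha / (1 - z) - L z * denom_z a b z alpha) / denom a b z alpha ^ 2.
Definition T_alpha (a b : nat) (z alpha : R) : R :=
  - (L z * denom_alpha a b z) / denom a b z alpha ^ 2.

Lemma T_z_correct a b z alpha : z < 1 -> denom a b z alpha <> 0 ->
  is_derive (fun t => T a b t alpha) z (T_z a b z alpha).
Proof.
  intros hz hd. unfold T, T_z, denom_z, L. unfold denom in *.
  auto_derive.
  - repeat split; auto; lra.
  - replace (1 + - z) with (1 - z) by ring. field. split; auto; lra.
Qed.

Lemma T_alpha_correct a b z alpha : denom a b z alpha <> 0 ->
  is_derive (fun s => T a b z s) alpha (T_alpha a b z alpha).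
Proof.
  intros hd. unfold T, T_alpha, denom_alpha, L. unfold denom in *.
  auto_derive.
  - replace (1 + - alpha) with (1 - alpha) by ring. auto.
  - replace (1 + - alpha) with (1 - alpha) by ring. field. auto.
Qed.

(* Second partial derivatives in general form; only their values at roots of
   D_alpha matter, where they simplify. *)
Lemma T_alpha_alpha a b z alpha : denom a b z alpha <> 0 ->
  is_derive (fun s => T_alpha a b z s) alpha
    (2 * L z * denom_alpha a b z ^ 2 / denom a b z alpha ^ 3).
Proof.
  intros hd. unfold T_alpha, denom_alpha, L. unfold denom in *.
  auto_derive.
  - replace (1 + - alpha) with (1 - alpha) by ring. auto.
  - replace (1 + - alpha) with (1 - alpha) by ring. field. auto.
Qed.

Lemma T_alpha_z a b z alpha : z < 1 -> denom a b z alpha <> 0 ->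
  is_derive (fun t => T_alpha a b t alpha) z
    (- (denom_alpha a b z / (1 - z) + L z * denom_alpha_z a b z) / denom a b z alpha ^ 2
     + 2 * L z * denom_alpha a b z * denom_z a b z alpha / denom a b z alpha ^ 3).
Proof.
  intros hz hd. unfold T_alpha, denom_alpha, denom_alpha_z, denom_z, L. unfold denom in *.
  auto_derive.
  - repeat split; auto; lra.
  - replace (1 + - z) with (1 - z) by ring. field. split; auto; lra.
Qed.

Lemma T_z_alpha a b z alpha : z < 1 -> denom a b z alpha <> 0 ->
  is_derive (fun s => T_z a b z s) alpha
    (((denom_alpha a b z / (1 - z) - L z * denom_alpha_z a b z) * denom a b z alpha
      - 2 * denom_alpha a b z * (denom a b z alpha / (1 - z) - L z * denom_z a b z alpha))
     / denom a b z alpha ^ 3).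
Proof.
  intros hz hd. unfold T_z, denom_alpha, denom_alpha_z, denom_z, L. unfold denom in *.
  auto_derive.
  - replace (1 + - alpha) with (1 - alpha) by ring. auto.
  - replace (1 + - alpha) with (1 - alpha) by ring. field. split; auto; lra.
Qed.

(* The pure second z-derivative exists; its value plays no role. *)
Lemma T_z_z a b z alpha : z < 1 -> denom a b z alpha <> 0 ->
  ex_derive (fun t => T_z a b t alpha) z.
Proof.
  intros hz hd. unfold T_z, denom_z, L. unfold denom in *.
  auto_derive. repeat split; auto; lra.
Qed.

(* D is jointly continuous, so it stays nonzero near a point where it is nonzero. *)
Lemma denom_continuous a b z alpha : continuity_2d_pt (denom a b) z alpha.
Proof.
  assert (hpow : forall n, continuity_2d_pt (fun u _ => u ^ n) z alpha).
  { intros n. apply (continuity_1d_2d_pt_comp (fun u => u ^ n)).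
    - apply derivable_continuous_pt, derivable_pt_pow.
    - apply continuity_2d_pt_id1. }
  unfold denom.
  apply continuity_2d_pt_plus; repeat apply continuity_2d_pt_mult;
    auto using continuity_2d_pt_const, continuity_2d_pt_id2, continuity_2d_pt_minus.
Qed.

(* z (z^n)' = n z^n, the identity that collapses derivatives of powers. *)
Lemma pow_pred_mul z n : z * (INR n * z ^ pred n) = INR n * z ^ n.
Proof. destruct n; simpl; ring. Qed.

Lemma L_pos z : 0 < z < 1 -> 0 < L z.
Proof.
  intros hz. unfold L.
  assert (ln (1 - z) < ln 1) by (apply ln_increasing; lra).
  rewrite ln_1 in *. lra.
Qed.

Lemma critical_point_iff a b z alpha : dom a b z alpha ->
  (critical_point (T a b) z alpha <-> T_z a b z alpha = 0 /\ T_alpha a b z alpha = 0).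
Proof.
  intros [hz hd].
  pose proof (proj1 (is_derive_Reals _ _ _) (T_z_correct a b z alpha ltac:(lra) hd)) as dz.
  pose proof (proj1 (is_derive_Reals _ _ _) (T_alpha_correct a b z alpha hd)) as dalpha.
  split.
  - intros [cz calpha]. split; eapply uniqueness_limite; eassumption.
  - intros [ez ealpha]. rewrite ez in dz. rewrite ealpha in dalpha. split; assumption.
Qed.

Lemma T_alpha_zero_root a b z alpha : 0 < z < 1 -> denom a b z alpha <> 0 ->
  T_alpha a b z alpha = 0 -> denom_alpha a b z = 0.
Proof.
  intros hz hd h0. pose proof (L_pos z hz).
  apply (Rmult_eq_reg_l (- L z / denom a b z alpha ^ 2)).
  - unfold T_alpha in h0. rewrite Rmult_0_r, <- h0. field. exact hd.
  - apply Rmult_integral_contrapositive. split; [lra|]. apply Rinv_neq_0_compat, pow_nonzero, hd.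
Qed.

Section Saddle.
Variables a b : nat.
Hypothesis ha : (0 < a)%nat.
Hypothesis hab : (a < b)%nat.

Let INR_a_pos : 0 < INR a.
Proof. apply lt_0_INR; lia. Qed.
Let INR_lt : INR a < INR b.
Proof. apply lt_INR; lia. Qed.

(* alpha~(z): the unique alpha making dT/dz vanish at a root z of D_alpha. *)
Definition alpha_crit (z : R) : R :=
  (INR b - 1) / (INR b - INR a) - 1 / (Defs.f z * (INR b - INR a)).

(* K(z): the slope of dT/dz in alpha and the mixed second derivative at a root. *)
Definition saddle_coef (z : R) : R :=
  L z * (INR b - INR a) / (z * (INR a * z ^ (a - 1))).

Lemma z_tilde_pow : z_tilde a b ^ (b - a) = INR a / INR b.
Proof.
  unfold z_tilde. rewrite <- Rpower_pow by (unfold Rpower; apply exp_pos).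
  rewrite Rpower_mult, minus_INR by lia.
  replace (1 / (INR b - INR a) * (INR b - INR a)) with 1 by (field; lra).
  apply Rpower_1, Rdiv_lt_0_compat; lra.
Qed.

Lemma z_tilde_bounds : 0 < z_tilde a b < 1.
Proof.
  assert (hpos : 0 < z_tilde a b) by (unfold z_tilde, Rpower; apply exp_pos).
  split; [exact hpos|].
  apply Rnot_le_lt; intro hge.
  pose proof (pow_R1_Rle _ (b - a) hge) as hpow. rewrite z_tilde_pow in hpow.
  apply (Rmult_le_compat_r (INR b)) in hpow; [|lra].
  replace (INR a / INR b * INR b) with (INR a) in hpow by (field; lra). lra.
Qed.

Lemma z_tilde_unique z : 0 < z -> z ^ (b - a) = INR a / INR b -> z = z_tilde a b.
Proof.
  intros hz hpow. unfold z_tilde. rewrite <- hpow, <- Rpower_pow, Rpower_mult by lra.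
  rewrite minus_INR by lia.
  replace ((INR b - INR a) * (1 / (INR b - INR a))) with 1 by (field; lra).
  now rewrite Rpower_1.
Qed.

Lemma denom_alpha_factor z :
  denom_alpha a b z = z ^ (a - 1) * (INR a - INR b * z ^ (b - a)).
Proof.
  unfold denom_alpha. replace (b - 1)%nat with (a - 1 + (b - a))%nat by lia.
  rewrite pow_add. ring.
Qed.

Lemma denom_alpha_root_iff z : 0 < z -> denom_alpha a b z = 0 <-> z = z_tilde a b.
Proof.
  intros hz. rewrite denom_alpha_factor.
  assert (0 < z ^ (a - 1)) by (apply pow_lt; lra).
  split.
  - intros h0. apply z_tilde_unique; [exact hz|].
    apply Rmult_integral in h0 as [h0|h0]; [lra|].
    apply (Rmult_eq_reg_r (INR b)); [|lra]. field_simplify; lra.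
  - intros ->. rewrite z_tilde_pow. field. lra.
Qed.

Lemma pow_at_root z : denom_alpha a b z = 0 -> z ^ (b - 1) = INR a / INR b * z ^ (a - 1).
Proof.
  unfold denom_alpha. intros h0.
  apply (Rmult_eq_reg_l (INR b)); [|lra]. field_simplify; lra.
Qed.

Section AtRoot.
Variable z : R.
Hypothesis hz : 0 < z < 1.
Hypothesis hroot : denom_alpha a b z = 0.

Let pow_pos : 0 < z ^ (a - 1). Proof. apply pow_lt; lra. Qed.
Let INR_pred n : (0 < n)%nat -> INR (n - 1) = INR n - 1.
Proof. intros. rewrite minus_INR by lia. reflexivity. Qed.

Lemma denom_at_root alpha : denom a b z alpha = INR a * z ^ (a - 1).
Proof. unfold denom. rewrite pow_at_root by exact hroot. field. lra. Qed.

Lemma denom_z_at_root alpha :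
  denom_z a b z alpha = (INR b - 1 - alpha * (INR b - INR a)) * (INR a * z ^ (a - 1)) / z.
Proof.
  apply (Rmult_eq_reg_l z); [|lra].
  unfold denom_z.
  replace (z * _) with (alpha * INR a * (z * (INR (a - 1) * z ^ pred (a - 1)))
     + (1 - alpha) * INR b * (z * (INR (b - 1) * z ^ pred (b - 1)))) by ring.
  rewrite !pow_pred_mul, pow_at_root, !INR_pred by (lia || exact hroot). field. lra.
Qed.

Lemma denom_alpha_z_at_root :
  denom_alpha_z a b z = (INR a - INR b) * (INR a * z ^ (a - 1)) / z.
Proof.
  apply (Rmult_eq_reg_l z); [|lra].
  unfold denom_alpha_z.
  replace (z * _) with (INR a * (z * (INR (a - 1) * z ^ pred (a - 1)))
     - INR b * (z * (INR (b - 1) * z ^ pred (b - 1)))) by ring.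
  rewrite !pow_pred_mul, pow_at_root, !INR_pred by (lia || exact hroot). field. lra.
Qed.

Let denom_ne alpha : denom a b z alpha <> 0.
Proof. rewrite denom_at_root. apply Rgt_not_eq, Rmult_lt_0_compat; lra. Qed.

Lemma T_alpha_at_root alpha : T_alpha a b z alpha = 0.
Proof. unfold T_alpha. rewrite hroot. field. apply denom_ne. Qed.

Lemma T_z_at_root alpha : T_z a b z alpha = saddle_coef z * (alpha - alpha_crit z).
Proof.
  pose proof (L_pos z hz).
  unfold T_z, saddle_coef, alpha_crit, Defs.f. fold (L z).
  rewrite denom_at_root, denom_z_at_root. field. repeat split; lra.
Qed.

Lemma T_alpha_alpha_at_root alpha : is_derive (fun s => T_alpha a b z s) alpha 0.
Proof.
  pose proof (T_alpha_alpha a b z alpha (denom_ne alpha)) as H. rewrite hroot in H.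
  match type of H with is_derive _ _ ?l => replace 0 with l; [exact H|] end.
  field. apply denom_ne.
Qed.

Lemma T_alpha_z_at_root alpha : is_derive (fun t => T_alpha a b t alpha) z (saddle_coef z).
Proof.
  pose proof (T_alpha_z a b z alpha ltac:(lra) (denom_ne alpha)) as H. rewrite hroot in H.
  match type of H with is_derive _ _ ?l => replace (saddle_coef z) with l; [exact H|] end.
  unfold saddle_coef. rewrite denom_at_root, denom_alpha_z_at_root. field. repeat split; lra.
Qed.

Lemma T_z_alpha_at_root alpha : is_derive (fun s => T_z a b z s) alpha (saddle_coef z).
Proof.
  pose proof (T_z_alpha a b z alpha ltac:(lra) (denom_ne alpha)) as H. rewrite hroot in H.
  match type of H with is_derive _ _ ?l => replace (saddle_coef z) with l; [exact H|] end.
  unfold saddle_coef. rewrite denom_at_root, denom_alpha_z_at_root. field. repeat split; lra.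
Qed.

End AtRoot.

Lemma saddle_coef_pos z : 0 < z < 1 -> 0 < saddle_coef z.
Proof.
  intros hz. pose proof (L_pos z hz). assert (0 < z ^ (a - 1)) by (apply pow_lt; lra).
  unfold saddle_coef. apply Rdiv_lt_0_compat; apply Rmult_lt_0_compat; try lra.
  apply Rmult_lt_0_compat; lra.
Qed.

Lemma dom_near_z_tilde alpha : locally_2d (dom a b) (z_tilde a b) alpha.
Proof.
  pose proof z_tilde_bounds as hzt.
  pose proof (proj2 (denom_alpha_root_iff _ (proj1 hzt)) eq_refl) as hroot.
  apply locally_2d_and.
  - assert (hpos : 0 < Rmin (z_tilde a b) (1 - z_tilde a b)) by (apply Rmin_pos; lra).
    exists (mkposreal _ hpos). intros u v hu _. simpl in hu.
    pose proof (Rmin_l (z_tilde a b) (1 - z_tilde a b)).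
    pose proof (Rmin_r (z_tilde a b) (1 - z_tilde a b)).
    apply Rabs_def2 in hu. lra.
  - apply continuity_2d_pt_neq_0; [apply denom_continuous|].
    rewrite denom_at_root by assumption.
    apply Rgt_not_eq, Rmult_lt_0_compat; [lra | apply pow_lt; lra].
Qed.

Theorem critical_points_of_T z alpha : dom a b z alpha ->
  critical_point (T a b) z alpha <-> z = z_tilde a b /\ alpha = alpha_tilde a b.
Proof.
  intros hdom. pose proof (proj1 hdom) as hz.
  rewrite (critical_point_iff _ _ _ _ hdom).
  split.
  - intros [ez ealpha].
    pose proof (T_alpha_zero_root a b z alpha hz (proj2 hdom) ealpha) as hroot.
    rewrite T_z_at_root in ez by assumption.
    apply Rmult_integral in ez as [ez|ez]; [pose proof (saddle_coef_pos z hz); lra|].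
    assert (ezt : z = z_tilde a b) by (apply denom_alpha_root_iff; lra).
    split; [exact ezt|]. unfold alpha_tilde. fold (alpha_crit (z_tilde a b)). rewrite <- ezt. lra.
  - intros [-> ->].
    assert (hroot : denom_alpha a b (z_tilde a b) = 0) by (apply denom_alpha_root_iff; lra).
    rewrite T_z_at_root, T_alpha_at_root by assumption.
    unfold alpha_tilde. fold (alpha_crit (z_tilde a b)). split; ring.
Qed.

Lemma hessian_at_z_tilde alpha :
  is_hessian (T a b) (z_tilde a b) alpha
    (Derive (fun t => T_z a b t alpha) (z_tilde a b))
    (saddle_coef (z_tilde a b)) (saddle_coef (z_tilde a b)) 0.
Proof.
  pose proof z_tilde_bounds as hzt.
  assert (hroot : denom_alpha a b (z_tilde a b) = 0) by (apply denom_alpha_root_iff; lra).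
  pose proof (locally_2d_singleton _ _ _ (dom_near_z_tilde alpha)) as [_ hd0].
  destruct (dom_near_z_tilde alpha) as [eps heps].
  exists (T_z a b), (T_alpha a b), eps.
  split; [apply cond_pos|]. split.
  - intros x y hx hy. destruct (heps x y hx hy) as [hxd hd].
    split; apply is_derive_Reals; [apply T_z_correct; lra | apply T_alpha_correct, hd].
  - repeat split; apply is_derive_Reals.
    + apply Derive_correct, T_z_z; [lra | exact hd0].
    + now apply T_z_alpha_at_root.
    + now apply T_alpha_z_at_root.
    + now apply T_alpha_alpha_at_root.
Qed.

End Saddle.

Theorem lemma7 (a b : nat) (ha : (3 <= a)%nat) (hab : (a < b)%nat) :
  dom a b (z_tilde a b) (alpha_tilde a b) /\
  critical_point (T a b) (z_tilde a b) (alpha_tilde a b) /\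
  (forall z alpha, dom a b z alpha -> critical_point (T a b) z alpha ->
     z = z_tilde a b /\ alpha = alpha_tilde a b) /\
  (exists hzz hza haz haa,
     is_hessian (T a b) (z_tilde a b) (alpha_tilde a b) hzz hza haz haa /\
     hzz * haa - hza * haz < 0).
Proof.
  assert (ha0 : (0 < a)%nat) by lia.
  assert (hdom : dom a b (z_tilde a b) (alpha_tilde a b))
    by exact (locally_2d_singleton _ _ _ (dom_near_z_tilde a b ha0 hab _)).
  split; [exact hdom|]. split; [|split].
  - now apply (critical_points_of_T a b ha0 hab).
  - intros z alpha hd. now apply (critical_points_of_T a b ha0 hab).
  - pose proof (saddle_coef_pos a b ha0 hab _ (z_tilde_bounds a b ha0 hab)) as hK.
    eexists _, _, _, _. split; [apply (hessian_at_z_tilde a b ha0 hab)|].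
    rewrite Rmult_0_r, Rminus_0_l. apply Ropp_lt_gt_0_contravar, Rmult_lt_0_compat; exact hK.
Qed.
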